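(* Let $G$ be a directed $st$-graph and $G'$ a subgraph of $G$ with the same source and sink such that $\mathrm{Path}_A(G')=\mathrm{Path}_A(G)$. Then $G$ is vulnerable if and only if $G'$ is vulnerable.
   Context: A directed $st$-graph $G=(V,E,s,t)$ is a finite directed graph with no self-loops and no parallel edges, with distinct source $s$ (no incoming edges) and sink $t$ (no outgoing edges), such that every vertex lies on some directed walk from $s$ to $t$. $\mathrm{Path}_A(G)$ is the set of acyclic directed $s$–$t$ paths in $G$; $P(G)$ is the set of all directed $s$–$t$ walks. A flow is a finitely supported $\varphi:P(G)\to\mathbb{R}_{\ge0}$, inducing $\varphi(e)=\sum_p(\text{occurrences of }e\text{ in }p)\varphi(p)$. A latency function assigns each edge a continuous non-decreasing $l_e:\mathbb{R}_{\ge0}\to\mathbb{R}_{\ge0}$, and $l_p(\varphi)=\sum_{e\in p}l_e(\varphi(e))$. A flow is feasible for $(G,r,l)$ if its total value is $r$, and a Wardrop flow if for all $p,q$ with $\varphi(p)>0$, $l_p(\varphi)\le l_q(\varphi)$; $L(G,r,l)$ is the common latency of used paths at any Wardrop flow ($0$ if $r=0$). $G$ is vulnerable if there exist $r\ge0$, a latency function $l$ and a subgraph $H$ of $G$ (same source and sink) with $L(G,r,l)>L(H,r,l|_H)$. *)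

From Stdlib Require Import Reals List Arith ClassicalEpsilon.
Import ListNotations.
Open Scope R_scope.

Definition edge := (nat * nat)%type.

Definition edge_eq_dec : forall x y : edge, {x = y} + {x <> y}.
Proof. decide equality; apply Nat.eq_dec. Defined.

(** A (candidate) graph with distinguished source and sink; its vertex set is
    {src, snk} together with all endpoints of edges. *)
Record graph := mkGraph { E : list edge; src : nat; snk : nat }.

Definition is_vertex (G : graph) (v : nat) : Prop :=
  v = src G \/ v = snk G \/ exists e, In e (E G) /\ (fst e = v \/ snd e = v).

(** Edges traversed by a walk given as its vertex sequence (no parallel edges,
    so the vertex sequence determines the walk); multiplicities are kept. *)
Fixpoint wedges (p : list nat) : list edge :=
  match p with
  | u :: ((v :: _) as q) => (u, v) :: wedges q
  | _ => []
  end.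

Definition is_walk (G : graph) (p : list nat) : Prop :=
  p <> [] /\ hd_error p = Some (src G) /\ last p 0%nat = snk G /\
  (forall e, In e (wedges p) -> In e (E G)).

Definition acyclic_path (G : graph) (p : list nat) : Prop :=
  is_walk G p /\ NoDup p.

Definition is_stgraph (G : graph) : Prop :=
  src G <> snk G /\
  NoDup (E G) /\
  (forall e, In e (E G) -> fst e <> snd e) /\
  (forall e, In e (E G) -> snd e <> src G) /\
  (forall e, In e (E G) -> fst e <> snk G) /\
  (forall v, is_vertex G v -> exists p, is_walk G p /\ In v p).

Definition subgraph (H G : graph) : Prop :=
  is_stgraph H /\ src H = src G /\ snk H = snk G /\
  (forall e, In e (E H) -> In e (E G)).

(** A finitely supported flow, represented as a finite list of
    (walk, weight) entries; phi(p) is the total weight of entries for p. *)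
Definition flow := list (list nat * R).

Definition is_flow (G : graph) (phi : flow) : Prop :=
  forall pw, In pw phi -> is_walk G (fst pw) /\ 0 <= snd pw.

Definition flow_val (phi : flow) : R :=
  fold_right (fun pw acc => snd pw + acc) 0 phi.

Definition flow_path (phi : flow) (p : list nat) : R :=
  fold_right (fun pw acc =>
    (if list_eq_dec Nat.eq_dec (fst pw) p then snd pw else 0) + acc) 0 phi.

Definition flow_edge (phi : flow) (e : edge) : R :=
  fold_right (fun pw acc =>
    INR (count_occ edge_eq_dec (wedges (fst pw)) e) * snd pw + acc) 0 phi.

Definition latency := edge -> R -> R.

Definition is_latency (G : graph) (l : latency) : Prop :=
  forall e, In e (E G) ->
    (forall x, 0 <= x -> 0 <= l e x) /\
    (forall x y, 0 <= x -> x <= y -> l e x <= l e y) /\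
    (forall x, 0 <= x -> limit1_in (l e) (fun y => 0 <= y) (l e x) x).

Definition path_lat (l : latency) (phi : flow) (p : list nat) : R :=
  fold_right (fun e acc => l e (flow_edge phi e) + acc) 0 (wedges p).

Definition feasible (G : graph) (r : R) (phi : flow) : Prop :=
  is_flow G phi /\ flow_val phi = r.

Definition wardrop (G : graph) (l : latency) (phi : flow) : Prop :=
  forall p q, 0 < flow_path phi p -> is_walk G q ->
    path_lat l phi p <= path_lat l phi q.

(** L(G, r, l): the common latency of used paths at a Wardrop flow
    (0 if r = 0), selected by Hilbert's epsilon. *)
Definition Lwar (G : graph) (r : R) (l : latency) : R :=
  epsilon (inhabits 0) (fun x =>
    (r = 0 /\ x = 0) \/
    (0 < r /\ exists phi, feasible G r phi /\ wardrop G l phi /\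
        exists p, 0 < flow_path phi p /\ path_lat l phi p = x)).

Definition vulnerable (G : graph) : Prop :=
  exists (r : R) (l : latency) (H : graph),
    0 <= r /\ is_latency G l /\ subgraph H G /\ Lwar G r l > Lwar H r l.

From Stdlib Require Import Reals List Arith ClassicalEpsilon Permutation Lia Lra
  FunctionalExtensionality PropExtensionality.
Import ListNotations.
Open Scope R_scope.

(* Every s-t walk contains an acyclic s-t path whose edge multiset it dominates.
   A Wardrop flow can therefore be rerouted, walk by walk, onto acyclic paths:
   the Wardrop condition forces every discarded edge of a used walk to have
   latency zero, so by monotonicity no edge latency changes.  Since all acyclic
   paths of G lie in G', this gives L(G) = L(G'); likewise, deleting from a
   subgraph H the edges lying on no acyclic path leaves L(H) unchanged, and the
   pruned subgraph of G lies in G'.  Conversely, a latency witnessing the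
   vulnerability of G' extended by zero to G witnesses that of G. *)

Definition submultiset (A B : list edge) : Prop := exists rest, Permutation B (A ++ rest).

Lemma submultiset_refl A : submultiset A A.
Proof. exists []; rewrite app_nil_r; apply Permutation_refl. Qed.

Lemma submultiset_trans A B C : submultiset A B -> submultiset B C -> submultiset A C.
Proof.
  intros [r1 H1] [r2 H2]; exists (r1 ++ r2).
  rewrite app_assoc; apply (Permutation_trans H2), Permutation_app_tail, H1.
Qed.

Lemma submultiset_incl A B : submultiset A B -> incl A B.
Proof.
  intros [rest H] e He; apply (Permutation_in _ (Permutation_sym H)), in_or_app; auto.
Qed.

Lemma count_occ_submultiset A B e : submultiset A B ->
  (count_occ edge_eq_dec A e <= count_occ edge_eq_dec B e)%nat.
Proof.
  intros [rest H]; rewrite (proj1 (Permutation_count_occ _ _ _) H e), count_occ_app; lia.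
Qed.

Lemma wedges_app_cons (a c : list nat) (v : nat) :
  wedges (a ++ v :: c) = wedges (a ++ [v]) ++ wedges (v :: c).
Proof.
  induction a as [|x [|y a] IH]; [reflexivity..|].
  simpl in *; rewrite IH; reflexivity.
Qed.

Lemma wedges_remove_loop (a b c : list nat) (v : nat) :
  submultiset (wedges (a ++ v :: c)) (wedges (a ++ v :: b ++ v :: c)).
Proof.
  exists (wedges ((v :: b) ++ [v])).
  rewrite (wedges_app_cons a c), (wedges_app_cons a (b ++ v :: c)),
    app_comm_cons, (wedges_app_cons (v :: b) c), <- !app_assoc.
  apply Permutation_app_head, Permutation_app_comm.
Qed.

Lemma last_app_cons (a c : list nat) (v d : nat) : last (a ++ v :: c) d = last (v :: c) d.
Proof. induction a as [|x [|y a] IH]; [reflexivity..|]; exact IH. Qed.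

Lemma exists_acyclic_subwalk (G : graph) (p : list nat) : is_walk G p ->
  exists p', acyclic_path G p' /\ submultiset (wedges p') (wedges p).
Proof.
  induction p as [p IH] using (induction_ltof1 _ (@length nat)); unfold ltof in IH.
  intros Hp; destruct (ListDec.NoDup_dec Nat.eq_dec p) as [Hnd|Hdup].
  { exists p; split; [split|apply submultiset_refl]; assumption. }
  destruct (ListDec.not_NoDup Nat.eq_decidable Hdup)
    as (v & a & b & c & ->).
  destruct Hp as (_ & Hhd & Hlast & Hedges).
  assert (Hloop := wedges_remove_loop a b c v).
  destruct (IH (a ++ v :: c)) as (p' & Hacyc & Hsub).
  - rewrite !length_app; simpl; rewrite length_app; simpl; lia.
  - split; [destruct a; discriminate|].
    split; [destruct a; exact Hhd|].
    split; [rewrite last_app_cons in *; rewrite app_comm_cons, last_app_cons in Hlast;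
            exact Hlast|].
    intros e He; apply Hedges, (submultiset_incl _ _ Hloop), He.
  - exists p'; split; [exact Hacyc|exact (submultiset_trans _ _ _ Hsub Hloop)].
Qed.

Definition sum_cost (c : edge -> R) (A : list edge) : R :=
  fold_right (fun e acc => c e + acc) 0 A.

Lemma path_lat_sum_cost l phi p :
  path_lat l phi p = sum_cost (fun e => l e (flow_edge phi e)) (wedges p).
Proof. reflexivity. Qed.

Lemma sum_cost_app c A B : sum_cost c (A ++ B) = sum_cost c A + sum_cost c B.
Proof. induction A as [|e A IH]; simpl; [|rewrite IH]; ring. Qed.

Lemma sum_cost_perm c A B : Permutation A B -> sum_cost c A = sum_cost c B.
Proof. induction 1; simpl; lra. Qed.

Lemma sum_cost_ext c c' A : (forall e, In e A -> c e = c' e) -> sum_cost c A = sum_cost c' A.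
Proof.
  induction A as [|e A IH]; simpl; intros H; [reflexivity|].
  rewrite H, IH; auto.
Qed.

Lemma sum_cost_nonneg c A : (forall e, In e A -> 0 <= c e) -> 0 <= sum_cost c A.
Proof.
  induction A as [|e A IH]; simpl; intros H; [lra|].
  pose proof (H e (or_introl eq_refl)); pose proof (IH (fun x Hx => H x (or_intror Hx))); lra.
Qed.

Lemma sum_cost_eq0 c A : (forall e, In e A -> 0 <= c e) -> sum_cost c A = 0 ->
  forall e, In e A -> c e = 0.
Proof.
  induction A as [|x A IH]; simpl; intros Hc Hs e He; [contradiction|].
  assert (0 <= c x) by auto.
  assert (0 <= sum_cost c A) by (apply sum_cost_nonneg; auto).
  destruct He as [<-|He]; [lra|apply IH; auto; lra].
Qed.

Lemma sum_cost_submultiset_ge c A B : submultiset A B -> (forall e, In e B -> 0 <= c e) ->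
  sum_cost c B <= sum_cost c A ->
  sum_cost c B = sum_cost c A /\
  forall e, c e <> 0 -> count_occ edge_eq_dec A e = count_occ edge_eq_dec B e.
Proof.
  intros [rest Hperm] Hc Hle.
  rewrite (sum_cost_perm _ _ _ Hperm), sum_cost_app in *.
  assert (Hrest : forall e, In e rest -> 0 <= c e).
  { intros e He; apply Hc, (Permutation_in _ (Permutation_sym Hperm)), in_or_app; auto. }
  pose proof (sum_cost_nonneg _ _ Hrest).
  split; [lra|].
  intros e Hne; rewrite (proj1 (Permutation_count_occ _ _ _) Hperm e), count_occ_app.
  enough (count_occ edge_eq_dec rest e = 0%nat) by lia.
  apply count_occ_not_In; intros He; apply Hne, (sum_cost_eq0 c rest); auto; lra.
Qed.

Lemma sum_cost_submultiset_le c A B : submultiset A B -> (forall e, In e B -> 0 <= c e) ->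
  sum_cost c A <= sum_cost c B.
Proof.
  intros [rest Hperm] Hc; rewrite (sum_cost_perm _ _ _ Hperm), sum_cost_app.
  enough (0 <= sum_cost c rest) by lra.
  apply sum_cost_nonneg; intros e He.
  apply Hc, (Permutation_in _ (Permutation_sym Hperm)), in_or_app; auto.
Qed.

Definition nonneg_weights (phi : flow) : Prop := forall pw, In pw phi -> 0 <= snd pw.

Lemma is_flow_nonneg_weights G phi : is_flow G phi -> nonneg_weights phi.
Proof. intros Hf pw Hpw; apply (Hf pw Hpw). Qed.

Lemma nonneg_weights_cons pw phi : nonneg_weights (pw :: phi) -> 0 <= snd pw /\ nonneg_weights phi.
Proof. intros H; split; [apply H; left|intros x Hx; apply H; right]; auto. Qed.

Lemma flow_edge_nonneg phi e : nonneg_weights phi -> 0 <= flow_edge phi e.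
Proof.
  induction phi as [|pw phi IH]; simpl; intros H; [lra|].
  destruct (nonneg_weights_cons _ _ H) as [Hw Hphi].
  pose proof (Rmult_le_pos _ _ (pos_INR (count_occ edge_eq_dec (wedges (fst pw)) e)) Hw).
  pose proof (IH Hphi); lra.
Qed.

Lemma flow_path_nonneg phi p : nonneg_weights phi -> 0 <= flow_path phi p.
Proof.
  induction phi as [|pw phi IH]; simpl; intros H; [lra|].
  destruct (nonneg_weights_cons _ _ H) as [Hw Hphi]; pose proof (IH Hphi).
  destruct list_eq_dec; lra.
Qed.

Lemma flow_path_ge_weight phi pw : nonneg_weights phi -> In pw phi ->
  snd pw <= flow_path phi (fst pw).
Proof.
  induction phi as [|x phi IH]; simpl; intros H Hin; [contradiction|].
  destruct (nonneg_weights_cons _ _ H) as [Hx Hphi].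
  pose proof (flow_path_nonneg _ (fst pw) Hphi).
  destruct Hin as [<-|Hin].
  - destruct list_eq_dec; [lra|congruence].
  - pose proof (IH Hphi Hin); destruct list_eq_dec; lra.
Qed.

Lemma flow_path_pos_entry phi p : 0 < flow_path phi p ->
  exists pw, In pw phi /\ fst pw = p /\ 0 < snd pw.
Proof.
  induction phi as [|x phi IH]; simpl; intros H; [lra|].
  destruct list_eq_dec as [<-|]; [destruct (Rlt_dec 0 (snd x)); [exists x; auto|]|];
    destruct IH as (pw & ? & ? & ?); try lra; exists pw; auto.
Qed.

Definition reroute (f : list nat -> list nat) (phi : flow) : flow :=
  map (fun pw => (f (fst pw), snd pw)) phi.

Lemma flow_val_reroute f phi : flow_val (reroute f phi) = flow_val phi.
Proof. induction phi as [|pw phi IH]; simpl; [|rewrite IH]; reflexivity. Qed.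

Lemma in_reroute f phi qw : In qw (reroute f phi) <->
  exists pw, In pw phi /\ qw = (f (fst pw), snd pw).
Proof.
  unfold reroute; rewrite in_map_iff; split; intros (pw & H1 & H2); exists pw; auto.
Qed.

Lemma flow_edge_reroute_le f phi e : nonneg_weights phi ->
  (forall pw, In pw phi -> count_occ edge_eq_dec (wedges (f (fst pw))) e
                           <= count_occ edge_eq_dec (wedges (fst pw)) e)%nat ->
  flow_edge (reroute f phi) e <= flow_edge phi e.
Proof.
  induction phi as [|x phi IH]; simpl; intros H Hc; [lra|].
  destruct (nonneg_weights_cons _ _ H) as [Hx Hphi].
  pose proof (IH Hphi (fun pw Hpw => Hc pw (or_intror Hpw))).
  pose proof (Rmult_le_compat_r _ _ _ Hx (le_INR _ _ (Hc x (or_introl eq_refl)))); lra.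
Qed.

Lemma flow_edge_reroute_eq f phi e :
  (forall pw, In pw phi -> 0 < snd pw ->
     count_occ edge_eq_dec (wedges (f (fst pw))) e = count_occ edge_eq_dec (wedges (fst pw)) e) ->
  nonneg_weights phi -> flow_edge (reroute f phi) e = flow_edge phi e.
Proof.
  induction phi as [|x phi IH]; simpl; intros Hc H; [reflexivity|].
  destruct (nonneg_weights_cons _ _ H) as [Hx Hphi].
  rewrite IH by auto.
  destruct (Rle_lt_or_eq_dec _ _ Hx) as [Hpos|<-]; [rewrite Hc by auto|]; ring.
Qed.

Lemma reroute_nonneg_weights f phi : nonneg_weights phi -> nonneg_weights (reroute f phi).
Proof. intros H qw Hqw; apply in_reroute in Hqw as (pw & Hpw & ->); exact (H pw Hpw). Qed.

Definition edge_subgraph (H G : graph) : Prop :=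
  src H = src G /\ snk H = snk G /\ (forall e, In e (E H) -> In e (E G)).

Lemma subgraph_edge_subgraph H G : subgraph H G -> edge_subgraph H G.
Proof. intros [_ Hsub]; exact Hsub. Qed.

Lemma is_walk_edge_subgraph H G p : edge_subgraph H G -> is_walk H p -> is_walk G p.
Proof.
  intros (Hs & Ht & Hi) (Hne & Hhd & Hlast & Hp); repeat split; auto; congruence.
Qed.

Definition monotone_latency (G : graph) (l : latency) : Prop :=
  forall e, In e (E G) ->
    (forall x, 0 <= x -> 0 <= l e x) /\ (forall x y, 0 <= x -> x <= y -> l e x <= l e y).

Lemma is_latency_monotone G l : is_latency G l -> monotone_latency G l.
Proof. intros Hl e He; destruct (Hl e He) as (Hnonneg & Hmono & _); auto. Qed.

Lemma walk_latency_nonneg G l phi q : monotone_latency G l -> nonneg_weights phi ->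
  is_walk G q -> forall e, In e (wedges q) -> 0 <= l e (flow_edge phi e).
Proof.
  intros Hl Hphi (_ & _ & _ & Hq) e He.
  apply (proj1 (Hl e (Hq e He))), flow_edge_nonneg, Hphi.
Qed.

Definition wardrop_latency (G : graph) (r : R) (l : latency) (x : R) : Prop :=
  exists phi, feasible G r phi /\ wardrop G l phi /\
    exists p, 0 < flow_path phi p /\ path_lat l phi p = x.

Lemma Lwar_eq G H r l l' :
  (forall x, wardrop_latency G r l x <-> wardrop_latency H r l' x) ->
  Lwar G r l = Lwar H r l'.
Proof.
  intros Hx; unfold Lwar; f_equal; apply functional_extensionality; intros x.
  apply propositional_extensionality.
  split; intros [H0|[Hr Hw]]; auto; right; split; auto; apply Hx, Hw.
Qed.

Section Rerouting.

Variables (G G' : graph) (l : latency) (f : list nat -> list nat) (r : R) (phi : flow).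
Hypothesis G'_sub : edge_subgraph G' G.
Hypothesis l_mono : monotone_latency G l.
Hypothesis f_shortcut :
  forall p, is_walk G p -> is_walk G' (f p) /\ submultiset (wedges (f p)) (wedges p).
Hypothesis phi_feasible : feasible G r phi.
Hypothesis phi_wardrop : wardrop G l phi.

Let phi_nonneg : nonneg_weights phi := is_flow_nonneg_weights _ _ (proj1 phi_feasible).

Let walk_of_entry pw : In pw phi -> is_walk G (fst pw).
Proof. intros Hpw; apply (proj1 phi_feasible pw Hpw). Qed.

(* Wardrop forbids a used walk to be costlier than its shortcut, so the
   edges cut out have latency zero. *)
Lemma shortcut_used_walk pw : In pw phi -> 0 < snd pw ->
  path_lat l phi (f (fst pw)) = path_lat l phi (fst pw) /\
  forall e, l e (flow_edge phi e) <> 0 ->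
    count_occ edge_eq_dec (wedges (f (fst pw))) e = count_occ edge_eq_dec (wedges (fst pw)) e.
Proof.
  intros Hpw Hpos; pose proof (walk_of_entry _ Hpw) as Hp.
  destruct (f_shortcut _ Hp) as [Hfp Hsub].
  destruct (sum_cost_submultiset_ge (fun e => l e (flow_edge phi e)) _ _ Hsub) as [Heq Hcount].
  - exact (walk_latency_nonneg G l phi _ l_mono phi_nonneg Hp).
  - apply phi_wardrop; [|exact (is_walk_edge_subgraph _ _ _ G'_sub Hfp)].
    pose proof (flow_path_ge_weight _ _ phi_nonneg Hpw); lra.
  - split; [symmetry; exact Heq|exact Hcount].
Qed.

Lemma reroute_edge_latency e : In e (E G) ->
  l e (flow_edge (reroute f phi) e) = l e (flow_edge phi e).
Proof.
  intros He; destruct (l_mono e He) as [Hl0 Hlmono].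
  destruct (Req_dec (l e (flow_edge phi e)) 0) as [Hz|Hnz].
  - assert (Hpsi_e := flow_edge_nonneg _ e (reroute_nonneg_weights f _ phi_nonneg)).
    rewrite Hz; apply Rle_antisym; [rewrite <- Hz; apply Hlmono; [exact Hpsi_e|]|apply Hl0, Hpsi_e].
    apply flow_edge_reroute_le; [exact phi_nonneg|].
    intros pw Hpw; apply count_occ_submultiset, f_shortcut, walk_of_entry, Hpw.
  - rewrite flow_edge_reroute_eq; [reflexivity| |exact phi_nonneg].
    intros pw Hpw Hpos; apply (shortcut_used_walk pw Hpw Hpos), Hnz.
Qed.

Lemma reroute_path_lat q : is_walk G q -> path_lat l (reroute f phi) q = path_lat l phi q.
Proof.
  intros (_ & _ & _ & Hq); rewrite !path_lat_sum_cost.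
  apply sum_cost_ext; intros e He; apply reroute_edge_latency, Hq, He.
Qed.

Lemma reroute_used_walk qw : In qw (reroute f phi) -> 0 < snd qw ->
  exists p, 0 < flow_path phi p /\ path_lat l (reroute f phi) (fst qw) = path_lat l phi p.
Proof.
  intros Hqw Hpos; apply in_reroute in Hqw as (pw & Hpw & ->); simpl in *.
  pose proof (walk_of_entry _ Hpw) as Hp; destruct (f_shortcut _ Hp) as [Hfp _].
  exists (fst pw); split.
  - pose proof (flow_path_ge_weight _ _ phi_nonneg Hpw); lra.
  - rewrite reroute_path_lat by exact (is_walk_edge_subgraph _ _ _ G'_sub Hfp).
    apply (shortcut_used_walk pw Hpw Hpos).
Qed.

Lemma reroute_wardrop_latency x :
  (exists p, 0 < flow_path phi p /\ path_lat l phi p = x) -> wardrop_latency G' r l x.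
Proof.
  intros (p & Hp & Hx); exists (reroute f phi); split; [split|split].
  - intros qw Hqw; split; [|exact (reroute_nonneg_weights f _ phi_nonneg qw Hqw)].
    apply in_reroute in Hqw as (pw & Hpw & ->); apply f_shortcut, walk_of_entry, Hpw.
  - rewrite flow_val_reroute; apply phi_feasible.
  - intros p1 q Hp1 Hq.
    destruct (flow_path_pos_entry _ _ Hp1) as (qw & Hqw & <- & Hpos).
    destruct (reroute_used_walk qw Hqw Hpos) as (p0 & Hused & ->).
    pose proof (is_walk_edge_subgraph _ _ _ G'_sub Hq) as HqG.
    rewrite reroute_path_lat by exact HqG; apply phi_wardrop; assumption.
  - destruct (flow_path_pos_entry _ _ Hp) as (pw & Hpw & <- & Hpos).
    exists (f (fst pw)); split.
    + pose proof (flow_path_ge_weight (reroute f phi) (f (fst pw), snd pw)) as Hge.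
      simpl in Hge; apply (Rlt_le_trans _ (snd pw)); [exact Hpos|apply Hge].
      * exact (reroute_nonneg_weights f _ phi_nonneg).
      * apply in_reroute; exists pw; auto.
    + rewrite <- Hx, reroute_path_lat
        by exact (is_walk_edge_subgraph _ _ _ G'_sub (proj1 (f_shortcut _ (walk_of_entry _ Hpw)))).
      apply (shortcut_used_walk pw Hpw Hpos).
Qed.

End Rerouting.

Section AcyclicSubgraph.

Variables (G G' : graph) (r : R) (l : latency).
Hypothesis G'_sub : edge_subgraph G' G.
Hypothesis l_mono : monotone_latency G l.
Hypothesis acyclic_in_G' : forall p, acyclic_path G p -> is_walk G' p.

Lemma wardrop_latency_restrict x : wardrop_latency G r l x -> wardrop_latency G' r l x.
Proof.
  intros (phi & Hfeas & Hwar & Hused).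
  assert (Hf : exists f : list nat -> list nat, forall p,
             is_walk G p -> is_walk G' (f p) /\ submultiset (wedges (f p)) (wedges p)).
  { apply (choice (fun p p' => is_walk G p -> is_walk G' p' /\ submultiset (wedges p') (wedges p))).
    intros p; destruct (classic (is_walk G p)) as [Hp|Hp]; [|exists p; tauto].
    destruct (exists_acyclic_subwalk G p Hp) as (p' & Hacyc & Hsub).
    exists p'; auto. }
  destruct Hf as [f Hf].
  exact (reroute_wardrop_latency G G' l f r phi G'_sub l_mono Hf Hfeas Hwar x Hused).
Qed.

Lemma wardrop_latency_extend x : wardrop_latency G' r l x -> wardrop_latency G r l x.
Proof.
  intros (phi & [Hflow Hval] & Hwar & Hused).
  assert (Hphi := is_flow_nonneg_weights _ _ Hflow).
  exists phi; split; [split|split]; [|exact Hval| |exact Hused].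
  - intros pw Hpw; destruct (Hflow pw Hpw) as [Hp Hw].
    split; [exact (is_walk_edge_subgraph _ _ _ G'_sub Hp)|exact Hw].
  - intros p q Hp Hq.
    destruct (exists_acyclic_subwalk G q Hq) as (q' & Hacyc & Hsub).
    apply (Rle_trans _ _ _ (Hwar p q' Hp (acyclic_in_G' q' Hacyc))).
    rewrite !path_lat_sum_cost; apply sum_cost_submultiset_le; [exact Hsub|].
    exact (walk_latency_nonneg G l phi q l_mono Hphi Hq).
Qed.

Lemma Lwar_acyclic_subgraph : Lwar G r l = Lwar G' r l.
Proof.
  apply Lwar_eq; intros x; split; [apply wardrop_latency_restrict|apply wardrop_latency_extend].
Qed.

End AcyclicSubgraph.

Lemma wardrop_latency_congr G r l l' x : (forall e, In e (E G) -> l e = l' e) ->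
  wardrop_latency G r l x -> wardrop_latency G r l' x.
Proof.
  intros Hl (phi & [Hflow Hval] & Hwar & p & Hp & Hx).
  assert (Hlat : forall q, is_walk G q -> path_lat l phi q = path_lat l' phi q).
  { intros q (_ & _ & _ & Hq); rewrite !path_lat_sum_cost.
    apply sum_cost_ext; intros e He; rewrite (Hl e (Hq e He)); reflexivity. }
  assert (Hused : forall q, 0 < flow_path phi q -> is_walk G q).
  { intros q Hq; destruct (flow_path_pos_entry _ _ Hq) as (pw & Hpw & <- & _).
    apply (Hflow pw Hpw). }
  exists phi; split; [split; assumption|split].
  - intros p1 q Hp1 Hq; rewrite <- !Hlat by auto; apply Hwar; assumption.
  - exists p; split; [exact Hp|rewrite <- Hlat by auto; exact Hx].
Qed.

Lemma Lwar_latency_congr G r l l' : (forall e, In e (E G) -> l e = l' e) ->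
  Lwar G r l = Lwar G r l'.
Proof.
  intros Hl; apply Lwar_eq; intros x; split; apply wardrop_latency_congr; [exact Hl|].
  intros e He; symmetry; apply Hl, He.
Qed.

Definition on_acyclic_path (H : graph) (e : edge) : Prop :=
  exists p, acyclic_path H p /\ In e (wedges p).

Definition prune (H : graph) : graph :=
  mkGraph (filter (fun e => if excluded_middle_informative (on_acyclic_path H e)
                            then true else false) (E H))
          (src H) (snk H).

Lemma in_prune H e : In e (E (prune H)) <-> In e (E H) /\ on_acyclic_path H e.
Proof.
  simpl; rewrite filter_In.
  destruct excluded_middle_informative; intuition discriminate.
Qed.

Lemma prune_edge_subgraph H : edge_subgraph (prune H) H.
Proof. repeat split; intros e He; apply in_prune in He; apply He. Qed.

Lemma acyclic_path_prune H p : acyclic_path H p -> is_walk (prune H) p.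
Proof.
  intros Hp; pose proof Hp as [(Hne & Hhd & Hlast & _) _].
  repeat split; auto; intros e He; apply in_prune; split; [apply Hp, He|exists p; auto].
Qed.

Lemma wedges_endpoints p u v : In (u, v) (wedges p) -> In u p /\ In v p.
Proof.
  induction p as [|x [|y p] IH]; simpl; [tauto|tauto|].
  intros [Hxy|Hin]; [injection Hxy as <- <-; simpl; auto|].
  destruct (IH Hin); split; right; assumption.
Qed.

Lemma walk_endpoints_in G p : is_walk G p -> In (src G) p /\ In (snk G) p.
Proof.
  intros (Hne & Hhd & Hlast & _); split.
  - destruct p; inversion Hhd; left; reflexivity.
  - rewrite <- Hlast; rewrite (app_removelast_last 0%nat Hne) at 2.
    apply in_or_app; right; left; reflexivity.
Qed.

Lemma prune_stgraph H : is_stgraph H -> is_stgraph (prune H).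
Proof.
  intros (Hst & Hnodup & Hloop & Hin_src & Hout_snk & Hvertex).
  assert (Hedge : forall e, In e (E (prune H)) -> In e (E H))
    by (intros e He; apply in_prune in He; apply He).
  assert (Hpath : exists p, acyclic_path H p).
  { destruct (Hvertex (src H)) as (p & Hp & _); [left; reflexivity|].
    destruct (exists_acyclic_subwalk H p Hp) as (p' & Hp' & _); exists p'; exact Hp'. }
  destruct Hpath as (p0 & Hp0); pose proof (acyclic_path_prune H p0 Hp0) as Hw0.
  split; [exact Hst|split; [apply NoDup_filter, Hnodup|]].
  split; [intros e He; apply Hloop, Hedge, He|].
  split; [intros e He; apply Hin_src, Hedge, He|].
  split; [intros e He; apply Hout_snk, Hedge, He|].
  intros v [->|[->|((u, w) & He & Hv)]].
  - exists p0; split; [exact Hw0|apply (walk_endpoints_in _ _ Hw0)].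
  - exists p0; split; [exact Hw0|apply (walk_endpoints_in _ _ Hw0)].
  - apply in_prune in He as (_ & p & Hp & Hinp).
    exists p; split; [apply acyclic_path_prune, Hp|].
    apply wedges_endpoints in Hinp; simpl in Hv; destruct Hv as [<-|<-]; apply Hinp.
Qed.

Lemma prune_subgraph H G G' : subgraph H G -> edge_subgraph G' G ->
  (forall p, acyclic_path G p -> is_walk G' p) -> subgraph (prune H) G'.
Proof.
  intros [HH (HsH & HtH & HiH)] (Hs' & Ht' & _) Hacyc.
  split; [apply prune_stgraph, HH|split; [simpl; congruence|split; [simpl; congruence|]]].
  intros e He; apply in_prune in He as (_ & p & [Hp Hnd] & Hinp).
  assert (HpG : acyclic_path G p).
  { split; [apply (is_walk_edge_subgraph H G p (conj HsH (conj HtH HiH)) Hp)|exact Hnd]. }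
  destruct (Hacyc p HpG) as (_ & _ & _ & Hedges); apply Hedges, Hinp.
Qed.

Lemma Lwar_prune H r l : monotone_latency H l -> Lwar H r l = Lwar (prune H) r l.
Proof.
  intros Hl; apply Lwar_acyclic_subgraph; [apply prune_edge_subgraph|exact Hl|].
  apply acyclic_path_prune.
Qed.

Lemma subgraph_trans H G' G : subgraph H G' -> subgraph G' G -> subgraph H G.
Proof.
  intros [HH (Hs & Ht & Hi)] [_ (Hs' & Ht' & Hi')].
  split; [exact HH|split; [congruence|split; [congruence|auto]]].
Qed.

Lemma is_latency_sub H G l : edge_subgraph H G -> is_latency G l -> is_latency H l.
Proof. intros (_ & _ & Hi) Hl e He; apply Hl, Hi, He. Qed.

Definition zero_ext (G : graph) (l : latency) : latency :=
  fun e => if in_dec edge_eq_dec e (E G) then l e else fun _ => 0.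

Lemma zero_ext_on G l e : In e (E G) -> zero_ext G l e = l e.
Proof. intros He; unfold zero_ext; destruct in_dec; tauto. Qed.

Lemma is_latency_zero_ext G' G l : is_latency G' l -> is_latency G (zero_ext G' l).
Proof.
  intros Hl e _; unfold zero_ext; destruct in_dec as [He|_]; [apply Hl, He|].
  split; [intros; lra|split; [intros; lra|]].
  intros x _; exact (limit_free (fun _ => 0) _ x x).
Qed.

Theorem lemma5 (G G' : graph) :
  is_stgraph G -> subgraph G' G ->
  (forall p, acyclic_path G' p <-> acyclic_path G p) ->
  (vulnerable G <-> vulnerable G').
Proof.
  intros _ HG'G Hac.
  assert (HsubG' := subgraph_edge_subgraph _ _ HG'G).
  assert (HLG : forall r l, monotone_latency G l -> Lwar G r l = Lwar G' r l).
  { intros r l Hl; apply Lwar_acyclic_subgraph; [exact HsubG'|exact Hl|].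
    intros p Hp; apply Hac, Hp. }
  split.
  - intros (r & l & H & Hr & Hl & HHG & Hgt).
    exists r, l, (prune H); split; [exact Hr|split; [exact (is_latency_sub _ _ _ HsubG' Hl)|]].
    split; [apply (prune_subgraph H G G' HHG HsubG'); intros p Hp; apply Hac, Hp|].
    rewrite <- HLG, <- Lwar_prune; [exact Hgt|apply is_latency_monotone..].
    + exact (is_latency_sub _ _ _ (subgraph_edge_subgraph _ _ HHG) Hl).
    + exact Hl.
  - intros (r & l & H & Hr & Hl & HHG' & Hgt).
    exists r, (zero_ext G' l), H.
    split; [exact Hr|split; [apply is_latency_zero_ext, Hl|]].
    split; [exact (subgraph_trans _ _ _ HHG' HG'G)|].
    assert (HiH : forall e, In e (E H) -> In e (E G')) by apply HHG'.
    rewrite HLG by apply is_latency_monotone, is_latency_zero_ext, Hl.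
    rewrite (Lwar_latency_congr G' r _ l), (Lwar_latency_congr H r _ l); [exact Hgt|..];
      intros e He; apply zero_ext_on; auto.
Qed.
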